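(* Let $\pi\in\mathcal C_n(321)$ and $w=\hat\pi$. Then $$\#\{(i,k): i+2\le k\le n,\ \hat\pi_k<\hat\pi_i<\hat\pi_{i+1}<\pi(\hat\pi_k)\}=N_{\underline{23}\,\underline{14}}(w)+N_{\underline{23}\,\underline{1}}(w).$$
   Context: Permutations of $[n]$ are written in one-line notation $\pi=\pi_1\cdots\pi_n$. A permutation contains $321$ if there are $i<j<k$ with $\pi_i>\pi_j>\pi_k$. $\mathcal C_n$ is the set of cyclic permutations of $[n]$ (a single $n$-cycle), and $\mathcal C_n(321)$ those avoiding $321$. The standard cycle notation of $\pi$ writes each cycle with its largest element first, as $(m,\pi(m),\pi^2(m),\dots)$, and lists the cycles in increasing order of their largest elements. $\theta:S_n\to S_n$ sends $\pi$ to the permutation whose one-line notation is the standard cycle notation of $\pi$ with parentheses erased; $\hat\pi=\theta(\pi)$. For a sequence $w=w_1\cdots w_N$ of distinct integers: $N_{\underline{23}\,\underline{14}}(w)=\#\{(i,j): i+2\le j\le N-1,\ w_j<w_i<w_{i+1}<w_{j+1}\}$; $N_{\underline{23}\,\underline{1}}(w)=\#\{i: i+1\le N-1,\ w_N<w_i<w_{i+1}\}$ (the ''1'' is the last entry of $w$). *)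

(* Convention: [n] = {1..n} is represented by 'I_n = {0..n-1}
   (a uniform shift by 1, which preserves all order comparisons). Sequence
   positions are 0-based. *)
From mathcomp Require Import all_boot all_order all_fingroup.
Set Implicit Arguments. Unset Strict Implicit. Unset Printing Implicit Defensive.

Definition avoids321 n (s : 'S_n) : bool :=
  ~~ [exists i : 'I_n, exists j : 'I_n, exists k : 'I_n,
        [&& i < j, j < k, s j < s i & s k < s j]].

Definition cyclic_perm n (s : 'S_n) : bool :=
  [forall x : 'I_n, #|porbit s x| == n].

Definition cycle_max n (s : 'S_n) (m : 'I_n) : bool :=
  [forall y in porbit s m, y <= m].

(* standard cycle notation with parentheses erased:
   cycles (m, s m, s^2 m, ...) with m the max of its cycle, listed in
   increasing order of m. This is the one-line notation of theta(s). *)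
Definition hat n (s : 'S_n) : seq 'I_n :=
  flatten [seq traject s m #|porbit s m| | m <- enum 'I_n & cycle_max s m].

Definition hatv n (s : 'S_n) : seq nat := map val (hat s).

(* s applied to a value in 0..n-1 (identity outside; never used there) *)
Definition app n (s : 'S_n) (x : nat) : nat :=
  if insub x is Some y then val (s y) else x.

(* N_{23 14}(w) : 1-based pairs (i,j), i+2 <= j <= N-1,
   w_j < w_i < w_{i+1} < w_{j+1}; here 0-based. *)
Definition N2314 (w : seq nat) : nat :=
  \sum_(i < size w) \sum_(j < size w)
     [&& i.+2 <= j, j.+1 < size w,
         nth 0 w j < nth 0 w i, nth 0 w i < nth 0 w i.+1
       & nth 0 w i.+1 < nth 0 w j.+1].

(* N_{23 1}(w) : 1-based i with i+1 <= N-1, w_N < w_i < w_{i+1}; 0-based. *)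
Definition N231 (w : seq nat) : nat :=
  \sum_(i < size w)
     [&& i.+2 < size w,
         nth 0 w (size w).-1 < nth 0 w i
       & nth 0 w i < nth 0 w i.+1].

(* lhs_count: 1-based pairs (i,k), i+2 <= k <= n,
   hat_k < hat_i < hat_{i+1} < pi(hat_k); here 0-based. *)
Definition lhs_count n (s : 'S_n) : nat :=
  let w := hatv s in
  \sum_(i < n) \sum_(k < n)
     [&& i.+2 <= k,
         nth 0 w k < nth 0 w i, nth 0 w i < nth 0 w i.+1
       & nth 0 w i.+1 < app s (nth 0 w k)].

(** A cyclic permutation has a single cycle, whose largest element is [n], so
    [w = theta(pi)] is the orbit [n, pi(n), pi^2(n), ...] read once around.
    Hence [pi(w_k) = w_(k+1)] for [k < n] and [pi(w_n) = n]: the pairs with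
    [k < n] are exactly the [23-14] occurrences of [w], and for [k = n] the
    condition [w_(i+1) < pi(w_n) = n] is automatic (only [w_1] equals [n]),
    leaving the [23-1] occurrences. *)
From mathcomp Require Import all_boot all_order all_fingroup.

Set Implicit Arguments.
Unset Strict Implicit.
Unset Printing Implicit Defensive.

Lemma pattern_count_orbit_word N (w : seq nat) (f : nat -> nat) :
    size w = N.+1 ->
    (forall k, k < N -> f (nth 0 w k) = nth 0 w k.+1) ->
    f (nth 0 w N) = N ->
    (forall k, 0 < k <= N -> nth 0 w k < N) ->
  \sum_(i < N.+1) \sum_(k < N.+1)
     [&& i.+2 <= k, nth 0 w k < nth 0 w i, nth 0 w i < nth 0 w i.+1
       & nth 0 w i.+1 < f (nth 0 w k)]
  = N2314 w + N231 w.
Proof.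
move=> size_w f_succ f_last w_lt_max.
rewrite /N2314 /N231 size_w -big_split; apply: eq_bigr => i _ /=.
rewrite big_ord_recr [X in _ = X + _]big_ord_recr /= ltnn andbF addn0.
congr addn; first by apply: eq_bigr => k _; rewrite f_succ // ltnS ltn_ord.
rewrite f_last ltnS; case: (leqP i.+2 N) => //= lt_i1_N.
by rewrite w_lt_max ?andbT //= ltnW.
Qed.

Section CyclicHat.

Variables (N : nat) (s : 'S_N.+1).
Hypothesis s_cyclic : cyclic_perm s.

Lemma porbit_cyclic x : porbit s x = [set: 'I_N.+1].
Proof.
apply/eqP; rewrite eqEcard subsetT cardsT card_ord /=.
by move/forallP: s_cyclic => /(_ x) /eqP ->.
Qed.

Lemma iter_cyclic_period x : iter N.+1 s x = x.
Proof. by have := iter_porbit s x; rewrite porbit_cyclic cardsT card_ord. Qed.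

Lemma cycle_max_cyclic m : cycle_max s m = (m == ord_max).
Proof.
apply/forallP/eqP => [max_m | ->]; last by move=> y; apply/implyP => _; exact: leq_ord.
apply/val_inj/eqP; rewrite /= eqn_leq -ltnS ltn_ord /=.
by have := max_m ord_max; rewrite porbit_cyclic inE.
Qed.

Lemma hat_cyclic : hat s = traject s ord_max N.+1.
Proof.
rewrite /hat (eq_filter cycle_max_cyclic) filter_pred1_uniq ?enum_uniq ?mem_enum //=.
by rewrite porbit_cyclic cardsT card_ord cats0.
Qed.

Lemma size_hatv_cyclic : size (hatv s) = N.+1.
Proof. by rewrite /hatv hat_cyclic size_map size_traject. Qed.

Lemma nth_hatv_cyclic k : k < N.+1 -> nth 0 (hatv s) k = iter k s ord_max.
Proof. by move=> lt_k; rewrite /hatv hat_cyclic (nth_map ord_max) ?size_traject // nth_traject. Qed.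

Lemma app_nth_hatv_cyclic k :
  k < N.+1 -> app s (nth 0 (hatv s) k) = iter k.+1 s ord_max.
Proof.
move=> lt_k; rewrite nth_hatv_cyclic // /app insubT; first exact: ltn_ord.
by move=> ?; rewrite iterS; congr (val (s _)); apply: val_inj.
Qed.

Lemma nth_hatv_cyclic_lt_max k : 0 < k <= N -> nth 0 (hatv s) k < N.
Proof.
case/andP=> k_gt0 le_k_N; rewrite nth_hatv_cyclic // ltn_neqAle -ltnS ltn_ord andbT.
apply/negP=> /eqP iter_max.
have uniq_orbit := uniq_traject_porbit s ord_max.
rewrite porbit_cyclic cardsT card_ord in uniq_orbit.
have := nth_uniq ord_max (i := k) (j := 0) _ _ uniq_orbit.
rewrite !size_traject !nth_traject // gtn_eqF // => /(_ le_k_N isT) /eqP; apply.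
exact: val_inj.
Qed.

End CyclicHat.

Theorem mainTheorem5 (n : nat) (s : 'S_n) :
  cyclic_perm s -> avoids321 s ->
  lhs_count s = N2314 (hatv s) + N231 (hatv s).
Proof.
case: n s => [|N] s s_cyclic _.
  have -> : hatv s = [::] by rewrite /hatv; case: (hat s) => // [[]].
  by rewrite /lhs_count /N2314 /N231 !big_ord0.
apply: pattern_count_orbit_word (size_hatv_cyclic s_cyclic) _ _ _.
- move=> k lt_k_N; rewrite app_nth_hatv_cyclic ?nth_hatv_cyclic //; exact: ltnW.
- by rewrite app_nth_hatv_cyclic // iter_cyclic_period.
- exact: nth_hatv_cyclic_lt_max.
Qed.
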